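(* Consider the single-sensor system $x_{k+1}=Ax_k+w_k$, $y_k=Cx_k+v_k$ ($w_k,v_k$ independent zero-mean Gaussian with covariances $Q,R$), $(A,C)$ detectable, $(A,Q^{1/2})$ stabilizable, with the local Kalman filter in steady state with filtered error covariance $\bar P$. Let $f(X)=AXA^T+Q$, $\mathcal{S}=\{f^n(\bar P):n\ge0\}$, $p,q\in[0,1]$, $E\ge0$, $\beta\in(0,1)$, $K\ge1$, and for $\gamma\in\{0,1\}$ let $c(\gamma)=\gamma(1-p)+(1-\gamma)q$. Define $J_k:\mathcal{S}\times\{0,1\}\to\mathbb{R}$ by $J_{K+1}\equiv0$ and, for $k=K,\dots,1$, $$J_k(P,\gamma)=\min_{\nu\in\{0,1\}}\Big\{\beta\big[\nu c(\gamma)\mathrm{tr}\bar P+(1-\nu c(\gamma))\mathrm{tr}f(P)\big]+(1-\beta)\nu E+\nu c(\gamma)J_{k+1}(\bar P,1)+(1-\nu c(\gamma))J_{k+1}(f(P),0)\Big\},$$ and for $k=1,\dots,K$, $\nu\in\{0,1\}$: $L_k^1(P,\nu)=\beta[\nu(1-p)\mathrm{tr}\bar P+(1-\nu(1-p))\mathrm{tr}f(P)]+(1-\beta)\nu E+\nu(1-p)J_{k+1}(\bar P,1)+(1-\nu(1-p))J_{k+1}(f(P),0)$, $L_k^0(P,\nu)=\beta[\nu q\,\mathrm{tr}\bar P+(1-\nu q)\mathrm{tr}f(P)]+(1-\beta)\nu E+\nu qJ_{k+1}(\bar P,1)+(1-\nu q)J_{k+1}(f(P),0)$. Then $P\mapsto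 L_k^1(P,1)-L_k^1(P,0)$ and $P\mapsto L_k^0(P,1)-L_k^0(P,0)$ are decreasing functions on $\mathcal{S}$.
   Context: For symmetric matrices, $X\le Y$ means $Y-X$ is positive semidefinite; a function $F$ on $\mathcal{S}$ is decreasing if $X\le Y\Rightarrow F(X)\ge F(Y)$. The setting models Markovian packet drops with $p=\mathbb{P}(\gamma_k=0\mid\gamma_{k-1}=1)$ and $q=\mathbb{P}(\gamma_k=1\mid\gamma_{k-1}=0)$. *)

From HB Require Import structures.
From mathcomp Require Import all_boot all_order all_algebra.
From mathcomp Require Import all_classical all_reals all_analysis.
Set Implicit Arguments. Unset Strict Implicit. Unset Printing Implicit Defensive.
Import Order.TTheory GRing.Theory Num.Theory.
Local Open Scope ring_scope.
Import numFieldNormedType.Exports.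
Local Open Scope classical_set_scope.

Section Defs.
Variable R : realType.

Definition psd n (M : 'M[R]_n) : Prop :=
  M^T = M /\ forall v : 'cV[R]_n, 0 <= (v^T *m M *m v) 0 0.

Definition pd n (M : 'M[R]_n) : Prop :=
  M^T = M /\ forall v : 'cV[R]_n, v != 0 -> 0 < (v^T *m M *m v) 0 0.

Definition loewner_le n (X Y : 'M[R]_n) : Prop := psd (Y - X).

Definition schur_stable n (M : 'M[R]_n) : Prop :=
  forall i j : 'I_n, (fun k : nat => (M ^+ k) i j) @ \oo --> (0 : R^o).

Definition detectable n m (A : 'M[R]_n) (C : 'M[R]_(m, n)) : Prop :=
  exists L : 'M[R]_(n, m), schur_stable (A + L *m C).

Definition stabilizable n m (A : 'M[R]_n) (B : 'M[R]_(n, m)) : Prop :=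
  exists K : 'M[R]_(m, n), schur_stable (A + B *m K).

Definition fmap n (A Q : 'M[R]_n) (X : 'M[R]_n) : 'M[R]_n := A *m X *m A^T + Q.

(* Pbar is the steady-state filtered error covariance of the Kalman filter:
   with Ppred = f(Pbar) (steady-state prediction covariance),
   Pbar = Ppred - Ppred C^T (C Ppred C^T + R)^{-1} C Ppred, Pbar PSD. *)
Definition steady_state_filtered n m (A Q : 'M[R]_n) (C : 'M[R]_(m, n))
    (Rv : 'M[R]_m) (Pbar : 'M[R]_n) : Prop :=
  psd Pbar /\
  let Pp := fmap A Q Pbar in
  Pbar = Pp - Pp *m C^T *m invmx (C *m Pp *m C^T + Rv) *m C *m Pp.

Definition Sset n (A Q Pbar : 'M[R]_n) : set 'M[R]_n :=
  [set X | exists j : nat, X = iter j (fmap A Q) Pbar].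

Definition ind (b : bool) : R := if b then 1 else 0.

Definition cgam (p q : R) (g : bool) : R := ind g * (1 - p) + (1 - ind g) * q.

(* Jrem j = J_{K+1-j}: Jrem 0 = J_{K+1} = 0, Jrem (j+1) = J_{K-j}
   obtained from Jrem j = J_{K+1-j} by the recursion of the paper. *)
Fixpoint Jrem n (A Q Pbar : 'M[R]_n) (p q E beta : R) (j : nat)
    (P : 'M[R]_n) (g : bool) : R :=
  match j with
  | 0 => 0
  | j'.+1 =>
    let c := cgam p q g in
    let term (nu : bool) :=
      beta * (ind nu * c * \tr Pbar + (1 - ind nu * c) * \tr (fmap A Q P))
      + (1 - beta) * ind nu * E
      + ind nu * c * Jrem A Q Pbar p q E beta j' Pbar true
      + (1 - ind nu * c) * Jrem A Q Pbar p q E beta j' (fmap A Q P) false in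
    Num.min (term false) (term true)
  end.

Definition J n (A Q Pbar : 'M[R]_n) (p q E beta : R) (K k : nat)
    (P : 'M[R]_n) (g : bool) : R :=
  Jrem A Q Pbar p q E beta (K.+1 - k) P g.

Definition L1 n (A Q Pbar : 'M[R]_n) (p q E beta : R) (K k : nat)
    (P : 'M[R]_n) (nu : bool) : R :=
  beta * (ind nu * (1 - p) * \tr Pbar + (1 - ind nu * (1 - p)) * \tr (fmap A Q P))
  + (1 - beta) * ind nu * E
  + ind nu * (1 - p) * J A Q Pbar p q E beta K k.+1 Pbar true
  + (1 - ind nu * (1 - p)) * J A Q Pbar p q E beta K k.+1 (fmap A Q P) false.

Definition L0 n (A Q Pbar : 'M[R]_n) (p q E beta : R) (K k : nat)
    (P : 'M[R]_n) (nu : bool) : R :=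
  beta * (ind nu * q * \tr Pbar + (1 - ind nu * q) * \tr (fmap A Q P))
  + (1 - beta) * ind nu * E
  + ind nu * q * J A Q Pbar p q E beta K k.+1 Pbar true
  + (1 - ind nu * q) * J A Q Pbar p q E beta K k.+1 (fmap A Q P) false.

Definition decreasing_on n (S : set 'M[R]_n) (F : 'M[R]_n -> R) : Prop :=
  forall X Y, S X -> S Y -> loewner_le X Y -> F Y <= F X.

End Defs.

(** Write [G(P) = beta tr f(P) + J_(k+1)(f(P), 0)] for the cost of a stage
    whose transmission fails.  With success probability [c] (= [1 - p] or [q]),
    [L(P, 1) - L(P, 0) = c (beta tr Pbar + J_(k+1)(Pbar, 1) - G(P)) + (1 - beta) E],
    so the gain is decreasing as soon as [G] is increasing.  Since [f] and the
    trace are Loewner-monotone, this reduces to the monotonicity of every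
    [J_j(., gamma)], which follows by backward induction because each stage
    cost is a convex combination of a constant and [G]. *)
From Pilot Require Import Defs.
From HB Require Import structures.
From mathcomp Require Import all_boot all_order all_algebra.
From mathcomp Require Import all_classical all_reals all_analysis.
From mathcomp Require Import ring lra.
(* Re-import so that [fmap] refers to the Kalman prediction map, not the analysis library's [fmap]. *)
Import Pilot.Defs.
Set Implicit Arguments. Unset Strict Implicit. Unset Printing Implicit Defensive.
Import Order.TTheory GRing.Theory Num.Theory.
Local Open Scope ring_scope.

Lemma mxtrace_le (R : realType) (n : nat) (X Y : 'M[R]_n) :
  loewner_le X Y -> \tr X <= \tr Y.
Proof.
move=> [_ psdYX]; rewrite -subr_ge0 -linearB /= /mxtrace.
apply: sumr_ge0 => i _.
have := psdYX (delta_mx i 0).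
by rewrite trmx_delta -rowE -colE !mxE.
Qed.

Lemma fmap_loewner_le (R : realType) (n : nat) (A Q X Y : 'M[R]_n) :
  loewner_le X Y -> loewner_le (fmap A Q X) (fmap A Q Y).
Proof.
move=> [symYX psdYX]; rewrite /loewner_le.
have -> : fmap A Q Y - fmap A Q X = A *m (Y - X) *m A^T.
  by rewrite /fmap mulmxBr mulmxBl opprD addrACA subrr addr0.
split; first by rewrite !trmx_mul trmxK symYX mulmxA.
by move=> v; have := psdYX (A^T *m v); rewrite trmx_mul trmxK !mulmxA.
Qed.

Lemma ind_ge0 (R : realType) (b : bool) : 0 <= ind R b.
Proof. by case: b; rewrite /ind. Qed.

Lemma ind_le1 (R : realType) (b : bool) : ind R b <= 1.
Proof. by case: b; rewrite /ind. Qed.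

Section StageCost.
Variables (R : realType) (n : nat) (A Q Pbar : 'M[R]_n) (E beta : R).
Hypothesis beta_ge0 : 0 <= beta.

Definition stage_cost (c : R) (J : 'M[R]_n -> bool -> R) (P : 'M[R]_n)
    (nu : bool) : R :=
  beta * (ind R nu * c * \tr Pbar + (1 - ind R nu * c) * \tr (fmap A Q P))
  + (1 - beta) * ind R nu * E
  + ind R nu * c * J Pbar true
  + (1 - ind R nu * c) * J (fmap A Q P) false.

Definition idle_cost (J : 'M[R]_n -> bool -> R) (P : 'M[R]_n) : R :=
  beta * \tr (fmap A Q P) + J (fmap A Q P) false.

Definition loewner_monotone (F : 'M[R]_n -> R) : Prop :=
  forall X Y, loewner_le X Y -> F X <= F Y.

Lemma stage_costE c J P nu :
  stage_cost c J P nu =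
  ind R nu * c * (beta * \tr Pbar + J Pbar true) + (1 - beta) * ind R nu * E
  + (1 - ind R nu * c) * idle_cost J P.
Proof. by rewrite /stage_cost /idle_cost; ring. Qed.

Lemma stage_cost_gain c J P :
  stage_cost c J P true - stage_cost c J P false =
  c * (beta * \tr Pbar + J Pbar true - idle_cost J P) + (1 - beta) * E.
Proof. by rewrite !stage_costE /ind; ring. Qed.

Lemma idle_cost_monotone J :
  loewner_monotone (J^~ false) -> loewner_monotone (idle_cost J).
Proof.
move=> monoJ X Y leXY; have leF := fmap_loewner_le A Q leXY.
by apply: lerD; [apply: ler_wpM2l => //; apply: mxtrace_le | apply: monoJ].
Qed.

Lemma stage_cost_monotone c J nu : 0 <= c <= 1 ->
  loewner_monotone (idle_cost J) -> loewner_monotone (stage_cost c J ^~ nu).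
Proof.
move=> /andP[c0 c1] monoG X Y leXY; rewrite !stage_costE lerD2l.
have s1 : ind R nu * c <= 1.
  by rewrite -[1]mul1r ler_pM ?ind_ge0 ?ind_le1.
by apply: ler_wpM2l; [rewrite subr_ge0 | apply: monoG].
Qed.

Lemma stage_gain_decreasing c J (S : set 'M[R]_n) : 0 <= c ->
  loewner_monotone (idle_cost J) ->
  decreasing_on S (fun P => stage_cost c J P true - stage_cost c J P false).
Proof.
move=> c0 monoG X Y _ _ leXY; rewrite !stage_cost_gain lerD2r.
by apply: ler_wpM2l => //; rewrite lerD2l lerN2; apply: monoG.
Qed.

Variables (p q : R).
Hypotheses (p01 : 0 <= p <= 1) (q01 : 0 <= q <= 1).

Lemma cgam_ge0_le1 g : 0 <= cgam p q g <= 1.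
Proof.
by move: p01 q01 => /andP[? ?] /andP[? ?]; case: g; rewrite /cgam /ind; lra.
Qed.

Lemma JremS j P g :
  Jrem A Q Pbar p q E beta j.+1 P g =
  Num.min (stage_cost (cgam p q g) (Jrem A Q Pbar p q E beta j) P false)
          (stage_cost (cgam p q g) (Jrem A Q Pbar p q E beta j) P true).
Proof. by []. Qed.

Lemma Jrem_monotone j g : loewner_monotone (Jrem A Q Pbar p q E beta j ^~ g).
Proof.
elim: j g => [|j IH] g X Y leXY //; rewrite !JremS.
have monoG := idle_cost_monotone (IH false).
by apply: le_min2; apply: stage_cost_monotone => //; apply: cgam_ge0_le1.
Qed.

End StageCost.

Lemma L1E (R : realType) (n : nat) (A Q Pbar : 'M[R]_n) (p q E beta : R)
    (K k : nat) P nu :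
  L1 A Q Pbar p q E beta K k P nu =
  stage_cost A Q Pbar E beta (1 - p) (J A Q Pbar p q E beta K k.+1) P nu.
Proof. by []. Qed.

Lemma L0E (R : realType) (n : nat) (A Q Pbar : 'M[R]_n) (p q E beta : R)
    (K k : nat) P nu :
  L0 A Q Pbar p q E beta K k P nu =
  stage_cost A Q Pbar E beta q (J A Q Pbar p q E beta K k.+1) P nu.
Proof. by []. Qed.

Theorem lemma6 (R : realType) (n m : nat)
  (A Q Qh : 'M[R]_n) (C : 'M[R]_(m, n)) (Rv : 'M[R]_m) (Pbar : 'M[R]_n)
  (p q E beta : R) (K k : nat) :
  psd Q -> pd Rv ->
  psd Qh -> Qh *m Qh = Q ->
  detectable A C -> stabilizable A Qh ->
  steady_state_filtered A Q C Rv Pbar ->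
  0 <= p <= 1 -> 0 <= q <= 1 -> 0 <= E -> 0 < beta < 1 ->
  (1 <= K)%N -> (1 <= k <= K)%N ->
  decreasing_on (Sset A Q Pbar)
    (fun P => L1 A Q Pbar p q E beta K k P true - L1 A Q Pbar p q E beta K k P false)
  /\
  decreasing_on (Sset A Q Pbar)
    (fun P => L0 A Q Pbar p q E beta K k P true - L0 A Q Pbar p q E beta K k P false).
Proof.
move=> _ _ _ _ _ _ _ p01 q01 _ /andP[/ltW beta_ge0 _] _ _.
have monoG : loewner_monotone (idle_cost A Q beta (J A Q Pbar p q E beta K k.+1)).
  by apply: idle_cost_monotone => //; apply: Jrem_monotone.
have gain c : 0 <= c -> decreasing_on (Sset A Q Pbar) (fun P =>
    stage_cost A Q Pbar E beta c (J A Q Pbar p q E beta K k.+1) P true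
    - stage_cost A Q Pbar E beta c (J A Q Pbar p q E beta K k.+1) P false).
  by move=> c0; apply: stage_gain_decreasing.
split=> X Y SX SY leXY; rewrite /= ?L1E ?L0E; apply: gain => //.
- by case/andP: p01 => _; rewrite subr_ge0.
- by case/andP: q01.
Qed.
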